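(* Let $\ell\ge 6$ and $w\ge 0$ be integers, let $A=\langle A_1,\dots,A_\ell\rangle$ and $B=\langle B_1,\dots,B_\ell\rangle$ be real sequences, and let $\delta:\mathbb{R}\times\mathbb{R}\to[0,\infty)$ be a symmetric pairwise cost function with $\delta(a,a)=0$ for all $a$. Suppose that for all reals $a,b,x,y$ with $a\le x\le y\le b$ or $a\ge x\ge y\ge b$ we have $\delta(a,b)\ge \delta(a,y)+\delta(b,x)-\delta(x,y)$. Define $$\mathrm{LB\_Petitjean}_w(A,B)=\mathrm{minlrpaths}(A,B)+\sum_{i=4}^{\ell-3} \kappa_i+\sum_{j=4}^{\ell-3}\beta_j,$$ where $\kappa_i=\delta(A_i,\mathbb{U}^B_i)$ if $A_i>\mathbb{U}^B_i$, $\kappa_i=\delta(A_i,\mathbb{L}^B_i)$ if $A_i<\mathbb{L}^B_i$, and $\kappa_i=0$ otherwise; and $\beta_j$ is given by the first applicable case among: (1) $\delta(B_j,\mathbb{U}^A_j)-\delta(\mathbb{U}^{\Omega}_j,\mathbb{U}^A_j)$ if $B_j>\mathbb{U}^{\Omega}_j>\mathbb{U}^A_j$; (2) $\delta(B_j,\mathbb{L}^A_j)-\delta(\mathbb{L}^{\Omega}_j,\mathbb{L}^A_j)$ if $B_j<\mathbb{L}^{\Omega}_j<\mathbb{L}^A_j$; (3) $\delta(B_j,\mathbb{U}^{\Omega}_j)$ if $B_j>\mathbb{U}^{\Omega}_j$ and $\mathbb{U}^{\Omega}_j\le\mathbb{U}^A_j$; (4) $\delta(B_j,\mathbb{L}^{\Omega}_j)$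 if $B_j<\mathbb{L}^{\Omega}_j$ and $\mathbb{L}^{\Omega}_j\ge\mathbb{L}^A_j$; (5) $0$ otherwise. Then $\mathrm{LB\_Petitjean}_w(A,B)\le \mathrm{DTW}_w(A,B)$.
   Context: A warping path of $A$ and $B$ is a sequence of pairs $(i_1,j_1),\dots,(i_P,j_P)$ with $(i_1,j_1)=(1,1)$, $(i_P,j_P)=(\ell,\ell)$, and for each $1<k\le P$, $(i_{k-1},j_{k-1})\in\{(i_k-1,j_k),(i_k,j_k-1),(i_k-1,j_k-1)\}$. $\mathrm{DTW}_w(A,B)$ is the minimum of $\sum_{k=1}^P\delta(A_{i_k},B_{j_k})$ over all warping paths all of whose pairs satisfy $i_k-w\le j_k\le i_k+w$. For a real sequence $S$ of length $\ell$, its upper and lower envelopes with window $w$ are $\mathbb{U}^S_i=\max_{\max(1,i-w)\le j\le\min(\ell,i+w)}S_j$ and $\mathbb{L}^S_i=\min_{\max(1,i-w)\le j\le\min(\ell,i+w)}S_j$. The projection $\Omega=\Omega_w(A,B)$ is the sequence with $\Omega_i=\mathbb{U}^B_i$ if $A_i>\mathbb{U}^B_i$, $\Omega_i=\mathbb{L}^B_i$ if $A_i<\mathbb{L}^B_i$, and $\Omega_i=A_i$ otherwise; $\mathbb{U}^{\Omega},\mathbb{L}^{\Omega}$ are its envelopes with window $w$. Writing $\delta_{i,j}=\delta(A_i,B_j)$, $\mathrm{minlrpaths}(A,B)=\delta_{1,1}+\delta_{\ell,\ell}+\min[\delta_{1,2}+\delta_{1,3},\ \delta_{1,2}+\delta_{2,3},\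 \delta_{2,2}+\delta_{2,3},\ \delta_{2,2}+\delta_{3,3},\ \delta_{2,2}+\delta_{3,2},\ \delta_{2,1}+\delta_{3,2},\ \delta_{2,1}+\delta_{3,1}]+\min[\delta_{\ell,\ell-1}+\delta_{\ell,\ell-2},\ \delta_{\ell,\ell-1}+\delta_{\ell-1,\ell-2},\ \delta_{\ell-1,\ell-1}+\delta_{\ell-1,\ell-2},\ \delta_{\ell-1,\ell-1}+\delta_{\ell-2,\ell-2},\ \delta_{\ell-1,\ell-1}+\delta_{\ell-2,\ell-1},\ \delta_{\ell-1,\ell}+\delta_{\ell-2,\ell-1},\ \delta_{\ell-1,\ell}+\delta_{\ell-2,\ell}]$. *)

(* concrete reals R, plus Coquelicot's Rbar / Glb_Rbar for the
   minimum defining DTW. Sequences are functions nat -> R used at indices 1..l. *)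
From Stdlib Require Import Reals List Arith.
From Coquelicot Require Import Coquelicot.
Import ListNotations.
Open Scope R_scope.

Definition sum_range (lo hi : nat) (f : nat -> R) : R :=
  fold_right Rplus 0 (map f (seq lo (S hi - lo))).

Definition win_lo (w i : nat) : nat := Nat.max 1 (i - w).
Definition win_hi (l w i : nat) : nat := Nat.min l (i + w).

Definition upper_env (l w : nat) (X : nat -> R) (i : nat) : R :=
  let lo := win_lo w i in
  fold_right Rmax (X lo) (map X (seq lo (S (win_hi l w i) - lo))).
Definition lower_env (l w : nat) (X : nat -> R) (i : nat) : R :=
  let lo := win_lo w i in
  fold_right Rmin (X lo) (map X (seq lo (S (win_hi l w i) - lo))).

Definition proj_seq (l w : nat) (A B : nat -> R) (i : nat) : R :=
  if Rlt_dec (upper_env l w B i) (A i) then upper_env l w B i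
  else if Rlt_dec (A i) (lower_env l w B i) then lower_env l w B i
  else A i.

Definition step (p q : nat * nat) : Prop :=
  (fst q = S (fst p) /\ snd q = snd p) \/
  (fst q = fst p /\ snd q = S (snd p)) \/
  (fst q = S (fst p) /\ snd q = S (snd p)).

Fixpoint chain (p : nat * nat) (P : list (nat * nat)) : Prop :=
  match P with
  | [] => True
  | q :: P' => step p q /\ chain q P'
  end.

Definition warping_path (l : nat) (P : list (nat * nat)) : Prop :=
  match P with
  | [] => False
  | p :: P' => p = (1%nat, 1%nat) /\ last P p = (l, l) /\ chain p P'
  end.

Definition in_window (w : nat) (P : list (nat * nat)) : Prop :=
  List.Forall (fun p => (fst p <= snd p + w)%nat /\ (snd p <= fst p + w)%nat) P.

Definition path_cost (delta : R -> R -> R) (A B : nat -> R)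
  (P : list (nat * nat)) : R :=
  fold_right Rplus 0 (map (fun p => delta (A (fst p)) (B (snd p))) P).

Definition DTW (l w : nat) (delta : R -> R -> R) (A B : nat -> R) : Rbar :=
  Glb_Rbar (fun c => exists P, warping_path l P /\ in_window w P /\
                               c = path_cost delta A B P).

Definition dcost (delta : R -> R -> R) (A B : nat -> R) (i j : nat) : R :=
  delta (A i) (B j).
Arguments dcost delta A B (i j)%_nat.

Definition minlrpaths (l : nat) (delta : R -> R -> R) (A B : nat -> R) : R :=
  dcost delta A B 1 1 + dcost delta A B l l
  + Rmin (dcost delta A B 1 2 + dcost delta A B 1 3) (Rmin (dcost delta A B 1 2 + dcost delta A B 2 3) (Rmin (dcost delta A B 2 2 + dcost delta A B 2 3)
      (Rmin (dcost delta A B 2 2 + dcost delta A B 3 3) (Rmin (dcost delta A B 2 2 + dcost delta A B 3 2)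
      (Rmin (dcost delta A B 2 1 + dcost delta A B 3 2) (dcost delta A B 2 1 + dcost delta A B 3 1))))))
  + Rmin (dcost delta A B l (l-1) + dcost delta A B l (l-2)) (Rmin (dcost delta A B l (l-1) + dcost delta A B (l-1) (l-2))
      (Rmin (dcost delta A B (l-1) (l-1) + dcost delta A B (l-1) (l-2))
      (Rmin (dcost delta A B (l-1) (l-1) + dcost delta A B (l-2) (l-2))
      (Rmin (dcost delta A B (l-1) (l-1) + dcost delta A B (l-2) (l-1))
      (Rmin (dcost delta A B (l-1) l + dcost delta A B (l-2) (l-1)) (dcost delta A B (l-1) l + dcost delta A B (l-2) l)))))).

Definition kappa (l w : nat) (delta : R -> R -> R) (A B : nat -> R) (i : nat) : R :=
  if Rlt_dec (upper_env l w B i) (A i) then delta (A i) (upper_env l w B i)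
  else if Rlt_dec (A i) (lower_env l w B i) then delta (A i) (lower_env l w B i)
  else 0.

Definition beta (l w : nat) (delta : R -> R -> R) (A B : nat -> R) (j : nat) : R :=
  let Om := proj_seq l w A B in
  let UO := upper_env l w Om j in
  let LO := lower_env l w Om j in
  let UA := upper_env l w A j in
  let LA := lower_env l w A j in
  if Rlt_dec UO (B j) then
    if Rlt_dec UA UO then delta (B j) UA - delta UO UA
    else delta (B j) UO
  else if Rlt_dec (B j) LO then
    if Rlt_dec LO LA then delta (B j) LA - delta LO LA
    else delta (B j) LO
  else 0.

Definition LB_Petitjean (l w : nat) (delta : R -> R -> R) (A B : nat -> R) : R :=
  minlrpaths l delta A B
  + sum_range 4 (l - 3) (kappa l w delta A B)
  + sum_range 4 (l - 3) (beta l w delta A B).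

(* The projection Omega_i lies between A_i and B_j for every cell (i, j) of the
   window, and the four-point hypothesis on delta then gives
   kappa_i + beta_j <= delta(A_i, B_j) cell by cell.  A warping path reaches
   every row and every column, each for the first time in exactly one cell;
   charge kappa_i (for middle rows 4 <= i <= l-3) to the cell where row i is
   first reached, and beta_j likewise for columns.  The cells in the 3x3
   corners carry no such charge (l >= 6), and the three steps after (1,1)
   (resp. before (l,l)) cross both cells of one of the seven pairs in
   minlrpaths. *)

From Stdlib Require Import Reals List Arith Lia Lra.
From Coquelicot Require Import Coquelicot.
Import ListNotations.
Open Scope R_scope.

Section CostFunction.

Variable d : R -> R -> R.
Hypothesis d_nonneg : forall a b, 0 <= d a b.
Hypothesis d_sym : forall a b, d a b = d b a.
Hypothesis d_refl : forall a, d a a = 0.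
Hypothesis d_quad : forall a b x y,
  (a <= x /\ x <= y /\ y <= b) \/ (a >= x /\ x >= y /\ y >= b) ->
  d a b >= d a y + d b x - d x y.

Lemma d_split x c y : x <= c <= y -> d x c + d c y <= d x y.
Proof.
  intros Hc.
  assert (H := d_quad x y c c (or_introl (conj (proj1 Hc) (conj (Rle_refl c) (proj2 Hc))))).
  rewrite d_refl, (d_sym y c) in H. lra.
Qed.

Lemma d_split_rev x c y : y <= c <= x -> d x c + d c y <= d x y.
Proof.
  intros Hc. rewrite (d_sym x c), (d_sym c y), (d_sym x y).
  pose proof (d_split y c x Hc). lra.
Qed.

Lemma d_le_between x c y : x <= c <= y \/ y <= c <= x -> d x c <= d x y.
Proof.
  intros [Hc | Hc].
  - pose proof (d_split x c y Hc). pose proof (d_nonneg c y). lra.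
  - pose proof (d_split_rev x c y Hc). pose proof (d_nonneg c y). lra.
Qed.

Definition clamp (lo hi a : R) : R :=
  if Rlt_dec hi a then hi else if Rlt_dec a lo then lo else a.

Lemma clamp_between lo hi a b :
  lo <= b <= hi -> a <= clamp lo hi a <= b \/ b <= clamp lo hi a <= a.
Proof.
  unfold clamp. intros Hb.
  destruct (Rlt_dec hi a); [lra|]. destruct (Rlt_dec a lo); lra.
Qed.

Definition beta_cell (UO LO UA LA b : R) : R :=
  if Rlt_dec UO b then
    if Rlt_dec UA UO then d b UA - d UO UA else d b UO
  else if Rlt_dec b LO then
    if Rlt_dec LO LA then d b LA - d LO LA else d b LO
  else 0.

Lemma beta_cell_nonneg UO LO UA LA b : 0 <= beta_cell UO LO UA LA b.
Proof.
  unfold beta_cell.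
  destruct (Rlt_dec UO b); [destruct (Rlt_dec UA UO)|].
  - pose proof (d_split_rev b UO UA ltac:(lra)). pose proof (d_nonneg b UO). lra.
  - apply d_nonneg.
  - destruct (Rlt_dec b LO); [destruct (Rlt_dec LO LA)|]; [| apply d_nonneg | lra].
    pose proof (d_split b LO LA ltac:(lra)). pose proof (d_nonneg b LO). lra.
Qed.

(* [o] plays the projection Omega_i, lying between A_i = a and B_j = b;
   U*/L* are the envelopes at j of A and of Omega. *)
Lemma cell_bound a b o UO LO UA LA :
  a <= o <= b \/ b <= o <= a -> LO <= o <= UO -> LA <= a <= UA ->
  d a o + beta_cell UO LO UA LA b <= d a b.
Proof.
  intros Ho HO HA. unfold beta_cell.
  destruct (Rlt_dec UO b) as [Hb|Hb]; [|destruct (Rlt_dec b LO) as [Hb'|Hb']].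
  - assert (Hao : d a o <= d a UO) by (apply d_le_between; lra).
    destruct (Rlt_dec UA UO).
    + pose proof (d_quad a b UA UO ltac:(lra)). rewrite (d_sym UO UA). lra.
    + pose proof (d_split a UO b ltac:(lra)). rewrite (d_sym b UO). lra.
  - assert (Hao : d a o <= d a LO) by (apply d_le_between; lra).
    destruct (Rlt_dec LO LA).
    + pose proof (d_quad a b LA LO ltac:(lra)). rewrite (d_sym LO LA). lra.
    + pose proof (d_split_rev a LO b ltac:(lra)). rewrite (d_sym b LO). lra.
  - rewrite Rplus_0_r. apply d_le_between. exact Ho.
Qed.

End CostFunction.

Definition sum_over {T : Type} (f : T -> R) (s : list T) : R :=
  fold_right Rplus 0 (map f s).

Lemma sum_over_app {T : Type} (f : T -> R) s t :
  sum_over f (s ++ t) = sum_over f s + sum_over f t.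
Proof. unfold sum_over; induction s as [|x s IH]; simpl; [lra | rewrite IH; lra]. Qed.

Lemma sum_over_plus {T : Type} (f g : T -> R) s :
  sum_over (fun x => f x + g x) s = sum_over f s + sum_over g s.
Proof. unfold sum_over; induction s as [|x s IH]; simpl; [lra | rewrite IH; lra]. Qed.

Lemma sum_over_le {T : Type} (f g : T -> R) s :
  (forall x, In x s -> f x <= g x) -> sum_over f s <= sum_over g s.
Proof.
  unfold sum_over; induction s as [|x s IH]; simpl; intros H; [lra|].
  apply Rplus_le_compat; [apply H; now left | apply IH; intros y Hy; apply H; now right].
Qed.

Lemma sum_over_nonneg {T : Type} (f : T -> R) s :
  (forall x, 0 <= f x) -> 0 <= sum_over f s.
Proof.
  intros H. unfold sum_over; induction s as [|x s IH]; simpl; [lra|].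
  pose proof (H x). lra.
Qed.

Lemma sum_over_ext {T : Type} (f g : T -> R) s :
  (forall x, In x s -> f x = g x) -> sum_over f s = sum_over g s.
Proof.
  intros H. apply Rle_antisym; apply sum_over_le; intros x Hx; rewrite (H x Hx); lra.
Qed.

Lemma sum_over_zero {T : Type} (s : list T) : sum_over (fun _ => 0) s = 0.
Proof. unfold sum_over; induction s as [|x s IH]; simpl; lra. Qed.

Definition on_range (lo hi : nat) (f : nat -> R) (i : nat) : R :=
  if andb (lo <=? i)%nat (i <=? hi)%nat then f i else 0.

Lemma sum_over_on_range lo hi f a n :
  (a <= lo <= S hi)%nat -> (S hi <= a + n)%nat ->
  sum_over (on_range lo hi f) (seq a n) = sum_range lo hi f.
Proof.
  intros Hlo Hhi.
  replace n with ((lo - a) + ((S hi - lo) + (a + n - S hi)))%nat by lia.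
  rewrite !seq_app, !sum_over_app.
  replace (a + (lo - a))%nat with lo by lia.
  replace (lo + (S hi - lo))%nat with (S hi) by lia.
  rewrite (sum_over_ext _ (fun _ => 0) (seq a _)), (sum_over_ext _ f (seq lo _)),
    (sum_over_ext _ (fun _ => 0) (seq (S hi) _)), !sum_over_zero.
  - unfold sum_range, sum_over. lra.
  - intros i Hi. apply in_seq in Hi. unfold on_range.
    destruct (Nat.leb_spec lo i); [|lia]. destruct (Nat.leb_spec i hi); [lia|]. reflexivity.
  - intros i Hi. apply in_seq in Hi. unfold on_range.
    destruct (Nat.leb_spec lo i), (Nat.leb_spec i hi); trivial; lia.
  - intros i Hi. apply in_seq in Hi. unfold on_range.
    destruct (Nat.leb_spec lo i); [lia|]. reflexivity.
Qed.

Lemma last_cons {T : Type} (d q : T) P : last (q :: P) d = last P q.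
Proof.
  revert d q; induction P as [|r P IH]; intros d q; [reflexivity|].
  change (last (r :: P) d = last (r :: P) q). now rewrite !IH.
Qed.

Lemma chain_app_r p P Q : chain p (P ++ Q) -> chain (last P p) Q.
Proof.
  revert p; induction P as [|q P IH]; intros p; [easy|].
  intros [_ HP]. rewrite last_cons. exact (IH q HP).
Qed.

Lemma last_four_split {T : Type} (P : list T) :
  (4 <= length P)%nat -> exists P0 r3 r2 r1 e, P = P0 ++ [r3; r2; r1; e].
Proof.
  rewrite <- (rev_involutive P), length_rev.
  destruct (rev P) as [|e [|r1 [|r2 [|r3 R]]]]; cbn [length]; intros H; try lia.
  exists (rev R), r3, r2, r1, e. cbn [rev]. now rewrite <- !app_assoc.
Qed.

Lemma step_fst p q : step p q -> fst q = fst p \/ fst q = S (fst p).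
Proof. unfold step; lia. Qed.

Lemma step_snd p q : step p q -> snd q = snd p \/ snd q = S (snd p).
Proof. unfold step; lia. Qed.

Section Coordinate.

Variable g : nat * nat -> nat.
Hypothesis g_step : forall p q, step p q -> g q = g p \/ g q = S (g p).

Lemma chain_coord_mono p P : chain p P -> (g p <= g (last P p))%nat.
Proof.
  revert p; induction P as [|q P IH]; intros p; [cbn; lia|].
  intros [Hpq HP]. rewrite last_cons.
  specialize (IH q HP). destruct (g_step p q Hpq); lia.
Qed.

Lemma chain_coord_bounds p P q :
  chain p P -> In q P -> (g p <= g q <= g (last P p))%nat.
Proof.
  revert p; induction P as [|r P IH]; intros p; [easy|].
  intros [Hpr HP] [<- | Hq]; rewrite last_cons.
  - pose proof (chain_coord_mono r P HP). destruct (g_step p r Hpr); lia.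
  - specialize (IH r HP Hq). destruct (g_step p r Hpr); lia.
Qed.

Lemma chain_coord_length p P : chain p P -> (g (last P p) <= g p + length P)%nat.
Proof.
  revert p; induction P as [|q P IH]; intros p; [cbn; lia|].
  intros [Hpq HP]. rewrite last_cons. cbn [length].
  specialize (IH q HP). destruct (g_step p q Hpq); lia.
Qed.

Fixpoint first_visit_sum (f : nat -> R) (p : nat * nat) (P : list (nat * nat)) : R :=
  match P with
  | [] => 0
  | q :: P' => (if (g q =? g p)%nat then 0 else f (g q)) + first_visit_sum f q P'
  end.

Lemma first_visit_sum_chain f p P :
  chain p P -> first_visit_sum f p P = sum_over f (seq (S (g p)) (g (last P p) - g p)).
Proof.
  revert p; induction P as [|q P IH]; intros p; [cbn; intros _; now rewrite Nat.sub_diag|].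
  intros [Hpq HP]. cbn [first_visit_sum]. rewrite last_cons, (IH q HP).
  pose proof (chain_coord_mono q P HP).
  destruct (g_step p q Hpq) as [Hq | Hq]; rewrite Hq in *.
  - rewrite Nat.eqb_refl. lra.
  - rewrite (proj2 (Nat.eqb_neq _ _)) by lia.
    replace (g (last P q) - g p)%nat with (S (g (last P q) - S (g p))) by lia.
    reflexivity.
Qed.

Lemma first_visit_sum_le f p P :
  (forall i, 0 <= f i) -> first_visit_sum f p P <= sum_over (fun q => f (g q)) P.
Proof.
  intros Hf. revert p; induction P as [|q P IH]; intros p; cbn; [lra|].
  specialize (IH q). unfold sum_over in IH.
  destruct (g q =? g p)%nat; pose proof (Hf (g q)); lra.
Qed.

Lemma first_visit_sum_on_range lo hi f p P :
  chain p P -> (S (g p) <= lo <= S hi)%nat -> (hi <= g (last P p))%nat ->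
  first_visit_sum (on_range lo hi f) p P = sum_range lo hi f.
Proof.
  intros HP Hlo Hhi. rewrite first_visit_sum_chain by exact HP.
  apply sum_over_on_range; lia.
Qed.

End Coordinate.

Lemma chain_cell_bounds p P q : chain p P -> In q P ->
  (fst p <= fst q <= fst (last P p) /\ snd p <= snd q <= snd (last P p))%nat.
Proof.
  intros HP Hq.
  split; [exact (chain_coord_bounds fst step_fst p P q HP Hq)
         | exact (chain_coord_bounds snd step_snd p P q HP Hq)].
Qed.

Definition corner_min (D : nat -> nat -> R) : R :=
  Rmin (D 1%nat 2%nat + D 1%nat 3%nat) (Rmin (D 1%nat 2%nat + D 2%nat 3%nat)
  (Rmin (D 2%nat 2%nat + D 2%nat 3%nat) (Rmin (D 2%nat 2%nat + D 3%nat 3%nat)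
  (Rmin (D 2%nat 2%nat + D 3%nat 2%nat) (Rmin (D 2%nat 1%nat + D 3%nat 2%nat)
  (D 2%nat 1%nat + D 3%nat 1%nat)))))).

Definition corner_part (D : nat -> nat -> R) (q : nat * nat) : R :=
  if andb (fst q <=? 3)%nat (snd q <=? 3)%nat then D (fst q) (snd q) else 0.

Lemma corner_part_nonneg D q : (forall i j, 0 <= D i j) -> 0 <= corner_part D q.
Proof. intros HD. unfold corner_part. destruct andb; [apply HD | lra]. Qed.

Lemma corner_min_bounds D :
  corner_min D <= D 1%nat 2%nat + D 1%nat 3%nat /\
  corner_min D <= D 1%nat 2%nat + D 2%nat 3%nat /\
  corner_min D <= D 2%nat 2%nat + D 2%nat 3%nat /\
  corner_min D <= D 2%nat 2%nat + D 3%nat 3%nat /\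
  corner_min D <= D 2%nat 2%nat + D 3%nat 2%nat /\
  corner_min D <= D 2%nat 1%nat + D 3%nat 2%nat /\
  corner_min D <= D 2%nat 1%nat + D 3%nat 1%nat.
Proof.
  unfold corner_min. repeat split;
    repeat (apply Rmin_l || apply Rmin_r || (eapply Rle_trans; [apply Rmin_r |])).
Qed.

Lemma corner_min_le_path D q1 q2 q3 :
  (forall i j, 0 <= D i j) ->
  step (1%nat, 1%nat) q1 -> step q1 q2 -> step q2 q3 ->
  corner_min D <= corner_part D q1 + corner_part D q2 + corner_part D q3.
Proof.
  intros HD. pose proof (corner_min_bounds D).
  destruct q1 as [x1 y1], q2 as [x2 y2], q3 as [x3 y3].
  pose proof (HD x1 y1). pose proof (HD x2 y2). pose proof (HD x3 y3).
  unfold step, corner_part; cbn [fst snd].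
  intros [[-> ->] | [[-> ->] | [-> ->]]]
         [[-> ->] | [[-> ->] | [-> ->]]]
         [[-> ->] | [[-> ->] | [-> ->]]]; cbn; lra.
Qed.

Definition mirror (l : nat) (q : nat * nat) : nat * nat :=
  (l + 1 - fst q, l + 1 - snd q)%nat.

Lemma step_mirror l p q :
  (fst q <= l)%nat -> (snd q <= l)%nat -> step p q -> step (mirror l q) (mirror l p).
Proof. destruct p, q. unfold step, mirror; cbn. lia. Qed.

Lemma corner_min_le_start D P :
  (forall i j, 0 <= D i j) -> chain (1%nat, 1%nat) P -> (3 <= length P)%nat ->
  corner_min D <= sum_over (corner_part D) P.
Proof.
  destruct P as [|q1 [|q2 [|q3 P]]]; cbn [length]; try lia.
  intros HD (H1 & H2 & H3 & _) _.
  pose proof (corner_min_le_path D q1 q2 q3 HD H1 H2 H3).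
  pose proof (sum_over_nonneg (corner_part D) P (fun q => corner_part_nonneg D q HD)).
  unfold sum_over in *. cbn. lra.
Qed.

Definition mirrored (l : nat) (D : nat -> nat -> R) (i j : nat) : R :=
  D (l + 1 - i)%nat (l + 1 - j)%nat.

Lemma corner_min_le_end l D p P :
  (forall i j, 0 <= D i j) -> chain p P -> last P p = (l, l) -> (4 <= length P)%nat ->
  (forall q, In q P -> fst q <= l /\ snd q <= l)%nat ->
  D l l + corner_min (mirrored l D)
  <= sum_over (fun q => corner_part (mirrored l D) (mirror l q)) P.
Proof.
  intros HD HP Hlast Hlen Hle.
  destruct (last_four_split P Hlen) as (P0 & r3 & r2 & r1 & e & ->).
  destruct (chain_app_r _ _ _ HP) as (_ & H32 & H21 & H1e & _).
  replace e with (l, l) in *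
    by (rewrite <- Hlast; change (P0 ++ [r3; r2; r1; e]) with (P0 ++ [r3; r2; r1] ++ [e]);
        now rewrite app_assoc, last_last).
  assert (Hin : forall r, In r [r3; r2; r1; (l, l)] -> (fst r <= l /\ snd r <= l)%nat)
    by (intros r Hr; apply Hle, in_or_app; now right).
  assert (Hm1 := step_mirror l r1 (l, l) ltac:(cbn; lia) ltac:(cbn; lia) H1e).
  assert (Hm2 := step_mirror l r2 r1 ltac:(apply Hin; cbn; tauto) ltac:(apply Hin; cbn; tauto) H21).
  assert (Hm3 := step_mirror l r3 r2 ltac:(apply Hin; cbn; tauto) ltac:(apply Hin; cbn; tauto) H32).
  replace (mirror l (l, l)) with (1%nat, 1%nat) in Hm1 by (unfold mirror; cbn; f_equal; lia).
  pose proof (corner_min_le_path (mirrored l D) _ _ _ (fun i j => HD _ _) Hm1 Hm2 Hm3).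
  assert (Hll : corner_part (mirrored l D) (mirror l (l, l)) = D l l).
  { unfold mirror, corner_part, mirrored; cbn [fst snd].
    replace (l + 1 - l)%nat with 1%nat by lia. cbn. now replace (l + 1 - 1)%nat with l by lia. }
  pose proof (sum_over_nonneg (fun q => corner_part (mirrored l D) (mirror l q)) P0
    (fun q => corner_part_nonneg _ _ (fun i j => HD _ _))).
  rewrite sum_over_app. unfold sum_over in *. cbn [map fold_right]. rewrite Hll. lra.
Qed.

Lemma fold_right_Rmax_ge x0 s y : In y s -> y <= fold_right Rmax x0 s.
Proof.
  induction s as [|x s IH]; cbn; [easy|]. intros [<- | Hy]; [apply Rmax_l|].
  eapply Rle_trans; [apply IH, Hy | apply Rmax_r].
Qed.

Lemma fold_right_Rmin_le x0 s y : In y s -> fold_right Rmin x0 s <= y.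
Proof.
  induction s as [|x s IH]; cbn; [easy|]. intros [<- | Hy]; [apply Rmin_l|].
  eapply Rle_trans; [apply Rmin_r | apply IH, Hy].
Qed.

Lemma envelope_bounds l w X i j :
  (1 <= j <= l)%nat -> (j <= i + w)%nat -> (i <= j + w)%nat ->
  lower_env l w X i <= X j <= upper_env l w X i.
Proof.
  intros Hj Hji Hij.
  assert (Hin : In (X j) (map X (seq (win_lo w i) (S (win_hi l w i) - win_lo w i)))).
  { apply in_map, in_seq. unfold win_lo, win_hi. lia. }
  split; [apply fold_right_Rmin_le | apply fold_right_Rmax_ge]; exact Hin.
Qed.

Lemma minlrpaths_corners l delta A B : (3 <= l)%nat ->
  minlrpaths l delta A B =
  dcost delta A B 1 1 + dcost delta A B l l
  + corner_min (dcost delta A B) + corner_min (mirrored l (dcost delta A B)).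
Proof.
  intros Hl. unfold minlrpaths, corner_min, mirrored.
  replace (l + 1 - 1)%nat with l by lia.
  replace (l + 1 - 2)%nat with (l - 1)%nat by lia.
  replace (l + 1 - 3)%nat with (l - 2)%nat by lia.
  reflexivity.
Qed.

Lemma corner_part_mirror l D q :
  (1 <= fst q <= l)%nat -> (1 <= snd q <= l)%nat ->
  corner_part (mirrored l D) (mirror l q) =
  if andb (l - 2 <=? fst q)%nat (l - 2 <=? snd q)%nat then D (fst q) (snd q) else 0.
Proof.
  destruct q as [i j]; unfold corner_part, mirrored, mirror; cbn [fst snd]; intros Hi Hj.
  assert (Hflip : forall k, (1 <= k <= l)%nat -> (l + 1 - k <=? 3)%nat = (l - 2 <=? k)%nat)
    by (intros k Hk; apply Bool.eq_iff_eq_true; rewrite !Nat.leb_le; lia).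
  rewrite !Hflip by assumption.
  replace (l + 1 - (l + 1 - i))%nat with i by lia.
  now replace (l + 1 - (l + 1 - j))%nat with j by lia.
Qed.

Lemma on_range_nonneg lo hi f i : (forall k, 0 <= f k) -> 0 <= on_range lo hi f i.
Proof. intros Hf. unfold on_range. destruct andb; [apply Hf | lra]. Qed.

Section Sequences.

Variables (l w : nat) (A B : nat -> R) (delta : R -> R -> R).
Hypothesis hl : (6 <= l)%nat.
Hypothesis hnn : forall a b, 0 <= delta a b.
Hypothesis hsym : forall a b, delta a b = delta b a.
Hypothesis hzero : forall a, delta a a = 0.
Hypothesis htri : forall a b x y,
  (a <= x /\ x <= y /\ y <= b) \/ (a >= x /\ x >= y /\ y >= b) ->
  delta a b >= delta a y + delta b x - delta x y.

Lemma proj_seq_eq i :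
  proj_seq l w A B i = clamp (lower_env l w B i) (upper_env l w B i) (A i).
Proof. reflexivity. Qed.

Lemma kappa_eq i : kappa l w delta A B i = delta (A i) (proj_seq l w A B i).
Proof.
  unfold kappa, proj_seq.
  destruct Rlt_dec; [reflexivity|]. destruct Rlt_dec; [reflexivity|]. now rewrite hzero.
Qed.

Lemma beta_eq j : beta l w delta A B j =
  beta_cell delta (upper_env l w (proj_seq l w A B) j) (lower_env l w (proj_seq l w A B) j)
    (upper_env l w A j) (lower_env l w A j) (B j).
Proof. reflexivity. Qed.

Lemma kappa_nonneg i : 0 <= kappa l w delta A B i.
Proof. rewrite kappa_eq. apply hnn. Qed.

Lemma beta_nonneg j : 0 <= beta l w delta A B j.
Proof. rewrite beta_eq. now apply beta_cell_nonneg. Qed.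

Lemma kappa_beta_le i j :
  (1 <= i <= l)%nat -> (1 <= j <= l)%nat -> (j <= i + w)%nat -> (i <= j + w)%nat ->
  kappa l w delta A B i + beta l w delta A B j <= delta (A i) (B j).
Proof.
  intros Hi Hj Hji Hij. rewrite kappa_eq, beta_eq, proj_seq_eq.
  apply cell_bound; auto.
  - apply clamp_between, envelope_bounds; assumption.
  - rewrite <- proj_seq_eq. apply envelope_bounds; assumption.
  - apply envelope_bounds; assumption.
Qed.

Lemma cell_cost_split q :
  (1 <= fst q <= l)%nat -> (1 <= snd q <= l)%nat ->
  (fst q <= snd q + w)%nat -> (snd q <= fst q + w)%nat ->
  corner_part (dcost delta A B) q + corner_part (mirrored l (dcost delta A B)) (mirror l q)
  + on_range 4 (l - 3) (kappa l w delta A B) (fst q)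
  + on_range 4 (l - 3) (beta l w delta A B) (snd q)
  <= dcost delta A B (fst q) (snd q).
Proof.
  intros Hi Hj Hij Hji. rewrite corner_part_mirror by assumption.
  destruct q as [i j]; cbn [fst snd] in *.
  pose proof (kappa_beta_le i j Hi Hj Hji Hij).
  pose proof (kappa_nonneg i). pose proof (beta_nonneg j). pose proof (hnn (A i) (B j)).
  unfold corner_part, on_range, dcost; cbn [fst snd].
  destruct (Nat.leb_spec i 3), (Nat.leb_spec j 3), (Nat.leb_spec (l - 2) i),
    (Nat.leb_spec (l - 2) j), (Nat.leb_spec 4 i), (Nat.leb_spec i (l - 3)),
    (Nat.leb_spec 4 j), (Nat.leb_spec j (l - 3)); cbn; try lia; lra.
Qed.

Lemma path_cells_cost_split P :
  (forall q, In q P -> 1 <= fst q <= l /\ 1 <= snd q <= l)%nat ->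
  (forall q, In q P -> fst q <= snd q + w /\ snd q <= fst q + w)%nat ->
  sum_over (corner_part (dcost delta A B)) P
  + sum_over (fun q => corner_part (mirrored l (dcost delta A B)) (mirror l q)) P
  + sum_over (fun q => on_range 4 (l - 3) (kappa l w delta A B) (fst q)) P
  + sum_over (fun q => on_range 4 (l - 3) (beta l w delta A B) (snd q)) P
  <= sum_over (fun q => dcost delta A B (fst q) (snd q)) P.
Proof.
  intros Hrange Hwin. rewrite <- !sum_over_plus. apply sum_over_le. intros q Hq.
  destruct (Hrange q Hq), (Hwin q Hq). now apply cell_cost_split.
Qed.

Lemma path_cost_ge P :
  warping_path l P -> in_window w P -> LB_Petitjean l w delta A B <= path_cost delta A B P.
Proof.
  destruct P as [|p P]; [easy|]. intros (-> & Hlast & HP) HW.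
  rewrite last_cons in Hlast.
  assert (HD : forall i j, 0 <= dcost delta A B i j) by (intros; apply hnn).
  assert (Hrange : forall q, In q P -> (1 <= fst q <= l /\ 1 <= snd q <= l)%nat).
  { intros q Hq. pose proof (chain_cell_bounds _ _ q HP Hq). rewrite Hlast in *. cbn in *. lia. }
  assert (Hwin : forall q, In q P -> (fst q <= snd q + w /\ snd q <= fst q + w)%nat)
    by exact (proj1 (Forall_forall _ _) (Forall_inv_tail HW)).
  assert (Hlen : (l - 1 <= length P)%nat).
  { pose proof (chain_coord_length fst step_fst _ _ HP) as H. rewrite Hlast in H. cbn in H. lia. }
  pose proof (first_visit_sum_le fst (on_range 4 (l - 3) (kappa l w delta A B)) (1%nat, 1%nat) P
    (fun i => on_range_nonneg _ _ _ i kappa_nonneg)) as Hrows.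
  pose proof (first_visit_sum_le snd (on_range 4 (l - 3) (beta l w delta A B)) (1%nat, 1%nat) P
    (fun j => on_range_nonneg _ _ _ j beta_nonneg)) as Hcols.
  rewrite (first_visit_sum_on_range fst step_fst 4 (l - 3) _ _ _ HP) in Hrows
    by (try rewrite Hlast; cbn; lia).
  rewrite (first_visit_sum_on_range snd step_snd 4 (l - 3) _ _ _ HP) in Hcols
    by (try rewrite Hlast; cbn; lia).
  pose proof (corner_min_le_start _ P HD HP ltac:(lia)).
  pose proof (corner_min_le_end l _ _ P HD HP Hlast ltac:(lia)
    (fun q Hq => conj (proj2 (proj1 (Hrange q Hq))) (proj2 (proj2 (Hrange q Hq))))).
  pose proof (path_cells_cost_split P Hrange Hwin).
  change (path_cost delta A B ((1%nat, 1%nat) :: P))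
    with (dcost delta A B 1 1 + sum_over (fun q => dcost delta A B (fst q) (snd q)) P).
  unfold LB_Petitjean. rewrite minlrpaths_corners by lia. lra.
Qed.

End Sequences.

Theorem theorem1 (l w : nat) (A B : nat -> R) (delta : R -> R -> R)
  (hl : (6 <= l)%nat)
  (hnn : forall a b, 0 <= delta a b)
  (hsym : forall a b, delta a b = delta b a)
  (hzero : forall a, delta a a = 0)
  (htri : forall a b x y, (a <= x /\ x <= y /\ y <= b) \/ (a >= x /\ x >= y /\ y >= b) ->
            delta a b >= delta a y + delta b x - delta x y) :
  Rbar_le (Finite (LB_Petitjean l w delta A B)) (DTW l w delta A B).
Proof.
  apply (Glb_Rbar_correct _). intros c (P & HP & HW & ->).
  exact (path_cost_ge l w A B delta hl hnn hsym hzero htri P HP HW).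
Qed.
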